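(* Let $f$ be a harmonic function on $K$, let $[v,w]$ be any edge of any graph $G_m$ (in particular $[p_1,p_2]$), and let $g(t)=f(v+t(w-v))$, $t\in[0,1]$. Then $g$ is differentiable at $t=\frac13$ and $g'(\frac13)=0$. In particular, for the edge $[p_1,p_2]\cong[0,1]$, $(f|_{[0,1]})'(\frac13)=0$.
   Context: Let $p_0,p_1,p_2$ be the vertices of a unit equilateral triangle in $\mathbb{R}^2$, $F_i(x)=(x+p_i)/2$, and $K$ the Sierpinski gasket (the attractor of $F_0,F_1,F_2$). For words $w$ of length $m$, $F_w=F_{w_1}\circ\cdots\circ F_{w_m}$; the minimal triangles of the graph $G_m$ are the triangles with vertices $F_w(p_0),F_w(p_1),F_w(p_2)$, and the edges of $G_m$ are their sides (segments of length $2^{-m}$ contained in $K$). A continuous $f:K\to\mathbb{R}$ is harmonic if for every $m\ge0$ and every minimal triangle of $G_m$ with vertices $v_i,v_j,v_k$, the value at the midpoint $v_{ij}$ of $[v_i,v_j]$ is $\frac15(2f(v_i)+2f(v_j)+f(v_k))$. The edge $[p_1,p_2]$ is identified with $[0,1]$ via $t\mapsto p_1+t(p_2-p_1)$. *)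

From Stdlib Require Import Reals Lra List.
Open Scope R_scope.

Definition pt := (R * R)%type.

Definition padd (x y : pt) : pt := (fst x + fst y, snd x + snd y).
Definition psub (x y : pt) : pt := (fst x - fst y, snd x - snd y).
Definition pscal (a : R) (x : pt) : pt := (a * fst x, a * snd x).

Definition pdist (x y : pt) : R :=
  sqrt ((fst x - fst y) ^ 2 + (snd x - snd y) ^ 2).

Definition unit_equilateral (p0 p1 p2 : pt) : Prop :=
  pdist p0 p1 = 1 /\ pdist p1 p2 = 1 /\ pdist p0 p2 = 1.

Definition vert (p0 p1 p2 : pt) (i : nat) : pt :=
  match i with 0%nat => p0 | 1%nat => p1 | _ => p2 end.

Definition Fmap (p0 p1 p2 : pt) (i : nat) (x : pt) : pt :=
  pscal (1/2) (padd x (vert p0 p1 p2 i)).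

Definition word (m : nat) (w : list nat) : Prop :=
  length w = m /\ Forall (fun i => (i < 3)%nat) w.

Definition Fword (p0 p1 p2 : pt) (w : list nat) (x : pt) : pt :=
  fold_right (fun i y => Fmap p0 p1 p2 i y) x w.

Definition filled_triangle (p0 p1 p2 : pt) (x : pt) : Prop :=
  exists a b c : R, 0 <= a /\ 0 <= b /\ 0 <= c /\ a + b + c = 1 /\
    x = padd (pscal a p0) (padd (pscal b p1) (pscal c p2)).

(* Sierpinski gasket: the attractor of F_0,F_1,F_2, realized as the
   intersection over m of the unions over words |w| = m of F_w(filled triangle). *)
Definition SG (p0 p1 p2 : pt) (x : pt) : Prop :=
  forall m : nat, exists w : list nat, word m w /\
    exists y : pt, filled_triangle p0 p1 p2 y /\ x = Fword p0 p1 p2 w y.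

Definition continuous_on_set (K : pt -> Prop) (f : pt -> R) : Prop :=
  forall x, K x -> forall eps : R, 0 < eps -> exists delta : R, 0 < delta /\
    forall y, K y -> pdist x y < delta -> Rabs (f y - f x) < eps.

Definition midpoint (x y : pt) : pt := pscal (1/2) (padd x y).

(* harmonic function on K: continuous on K and satisfying the 2-2-1 / 5
   midpoint rule on every minimal triangle of every G_m *)
Definition harmonic (p0 p1 p2 : pt) (f : pt -> R) : Prop :=
  continuous_on_set (SG p0 p1 p2) f /\
  forall (m : nat) (w : list nat), word m w ->
  forall i j k : nat, (i < 3)%nat -> (j < 3)%nat -> (k < 3)%nat ->
    i <> j -> j <> k -> i <> k ->
    f (midpoint (Fword p0 p1 p2 w (vert p0 p1 p2 i)) (Fword p0 p1 p2 w (vert p0 p1 p2 j)))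
    = (2 * f (Fword p0 p1 p2 w (vert p0 p1 p2 i))
       + 2 * f (Fword p0 p1 p2 w (vert p0 p1 p2 j))
       + f (Fword p0 p1 p2 w (vert p0 p1 p2 k))) / 5.

From Stdlib Require Import Reals List Lra Lia.
From Coquelicot Require Import Coquelicot.
Import ListNotations.
Open Scope R_scope.

(* On the edge [F_u(p_i), F_u(p_j)], the parameter 1/3 is the fixed point of
   F_i o F_j, which shrinks the edge by the factor 1/4 around it.  Along the
   cells F_u F_(ij)^m, the 2-2-1/5 rule makes the spread of the three vertex
   values shrink by the factor 6/25 per step, and the maximum principle
   (obtained from the rule by convexity, and on the whole edge by continuity)
   bounds g(t) - g(1/3) by this spread when |t - 1/3| < 4^-m / 3.  As
   6/25 < 1/4, the difference quotients at 1/3 tend to 0. *)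

Lemma pt_ext (x y : pt) : fst x = fst y -> snd x = snd y -> x = y.
Proof. destruct x, y; simpl; intros -> ->; reflexivity. Qed.

Definition seg (a b : pt) (t : R) : pt := padd a (pscal t (psub b a)).

Lemma seg0 (a b : pt) : seg a b 0 = a.
Proof. apply pt_ext; unfold seg, padd, pscal, psub; simpl; ring. Qed.

Lemma midpoint_seg (a b : pt) : midpoint a b = seg a b (1/2).
Proof. apply pt_ext; unfold seg, midpoint, padd, pscal, psub; simpl; field. Qed.

Lemma pdist_seg (a b : pt) (s t : R) :
  pdist (seg a b s) (seg a b t) = Rabs (s - t) * pdist a b.
Proof.
  unfold pdist. rewrite <- sqrt_Rsqr_abs, <- sqrt_mult_alt by apply Rle_0_sqr.
  f_equal. unfold seg, padd, pscal, psub, Rsqr; simpl; ring.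
Qed.

Lemma Rle_pow_le_1 (x : R) (m n : nat) : 0 <= x <= 1 -> (m <= n)%nat -> x ^ n <= x ^ m.
Proof.
  intros Hx Hmn; induction Hmn as [|n _ IH]; [lra|].
  assert (0 <= x ^ n) by (apply pow_le; lra). simpl; nra.
Qed.

Lemma exists_pow_lt (q eps : R) : 0 <= q < 1 -> 0 < eps -> exists n, q ^ n < eps.
Proof.
  intros Hq Heps. destruct (pow_lt_1_zero q) with (y := eps) as [n Hn]; auto.
  { rewrite Rabs_right; lra. }
  exists n. specialize (Hn n (le_n n)).
  rewrite Rabs_right in Hn by (apply Rle_ge, pow_le; lra). exact Hn.
Qed.

Lemma pow_bracket (b x : R) (n : nat) : 0 < b < 1 -> 0 < x -> x < b ^ n ->
  exists m, (n <= m)%nat /\ b ^ S m <= x < b ^ m.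
Proof.
  intros Hb Hx Hxn. destruct (exists_pow_lt b x) as [K HK]; [lra | lra |].
  assert (HKx : b ^ K <= x) by lra. clear HK.
  induction K as [|K IH].
  - assert (b ^ n <= b ^ 0) by (apply Rle_pow_le_1; [lra | lia]). simpl in *; lra.
  - destruct (Rle_lt_dec (b ^ K) x) as [HK | HK]; [exact (IH HK) |].
    exists K. split; [| lra].
    destruct (Compare_dec.le_lt_dec n K) as [| HKn]; [assumption |].
    assert (b ^ n <= b ^ S K) by (apply Rle_pow_le_1; [lra | lia]). lra.
Qed.

Lemma in_interval_of_approx (lo hi x : R) :
  (forall eps, 0 < eps -> exists y, lo <= y <= hi /\ Rabs (x - y) < eps) ->
  lo <= x <= hi.
Proof.
  intros Happrox. split; apply Rnot_lt_le; intros Hout.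
  - destruct (Happrox (lo - x)) as (y & Hy & Hxy); [lra |].
    apply Rabs_def2 in Hxy; lra.
  - destruct (Happrox (x - hi)) as (y & Hy & Hxy); [lra |].
    apply Rabs_def2 in Hxy; lra.
Qed.

Lemma is_derive_0_of_geometric_bound (g : R -> R) (c r a b C : R) :
  0 < r -> 0 < b < 1 -> 0 <= a < b ->
  (forall m t, Rabs (t - c) < r * b ^ m -> Rabs (g t - g c) <= C * a ^ m) ->
  is_derive g c 0.
Proof.
  intros Hr Hb Ha Hbound.
  assert (HC : 0 <= C).
  { specialize (Hbound 0%nat c). rewrite !Rminus_diag, Rabs_R0 in Hbound.
    simpl in Hbound; lra. }
  set (q := a / b).
  assert (Hq : 0 <= q < 1).
  { unfold q; split; [apply Rdiv_le_0_compat | apply Rlt_div_l]; lra. }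
  apply is_derive_Reals. intros eps Heps.
  assert (Heps' : 0 < eps * r * b / (C + 1)).
  { apply Rdiv_lt_0_compat; [apply Rmult_lt_0_compat; [apply Rmult_lt_0_compat |] |]; lra. }
  destruct (exists_pow_lt q _ Hq Heps') as [n Hn].
  assert (Hdelta : 0 < r * b ^ n) by (apply Rmult_lt_0_compat; [| apply pow_lt]; lra).
  exists (mkposreal _ Hdelta). simpl. intros h Hh0 Hh.
  assert (Hhpos : 0 < Rabs h) by (apply Rabs_pos_lt; exact Hh0).
  destruct (pow_bracket b (Rabs h / r) n) as (m & Hnm & Hlow & Hup);
    [lra | apply Rdiv_lt_0_compat; lra | apply Rlt_div_l; lra |].
  apply Rlt_div_l in Hup; [| lra]. apply Rle_div_r in Hlow; [| lra].
  specialize (Hbound m (c + h)). replace (c + h - c) with h in Hbound by ring.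
  specialize (Hbound ltac:(lra)).
  assert (Ham : a ^ m = q ^ m * b ^ m) by (rewrite <- Rpow_mult_distr; f_equal; unfold q; field; lra).
  assert (Hqm : q ^ m <= q ^ n) by (apply Rle_pow_le_1; [lra | exact Hnm]).
  assert (Hqn : C * q ^ n < eps * r * b).
  { assert (0 <= q ^ n) by (apply pow_le; lra).
    apply Rlt_div_r in Hn; [| lra]. nra. }
  assert (Hbm : 0 < b ^ m) by (apply pow_lt; lra).
  assert (Hsm : b ^ S m = b * b ^ m) by reflexivity.
  rewrite Rminus_0_r, Rabs_div by exact Hh0. apply Rlt_div_l; [lra |].
  apply (Rle_lt_trans _ (C * q ^ n * b ^ m)).
  { rewrite Ham in Hbound. rewrite Rmult_assoc.
    apply (Rle_trans _ _ _ Hbound), Rmult_le_compat_l, Rmult_le_compat_r; lra. }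
  apply (Rlt_le_trans _ (eps * r * b * b ^ m)); [apply Rmult_lt_compat_r; lra |].
  replace (eps * r * b * b ^ m) with (eps * (b ^ S m * r)) by (rewrite Hsm; ring).
  apply Rmult_le_compat_l; lra.
Qed.

Section Gasket.

Variables p0 p1 p2 : pt.

Local Notation V := (vert p0 p1 p2).
Local Notation Fw := (Fword p0 p1 p2).
Local Notation Fm := (Fmap p0 p1 p2).
Local Notation filled := (filled_triangle p0 p1 p2).
Local Notation ternary w := (List.Forall (fun c => (c < 3)%nat) w).

Lemma Fword_cons (c : nat) (w : list nat) (x : pt) : Fw (c :: w) x = Fm c (Fw w x).
Proof. reflexivity. Qed.

Lemma Fword_app (w w' : list nat) (x : pt) : Fw (w ++ w') x = Fw w (Fw w' x).
Proof. unfold Fword; rewrite fold_right_app; reflexivity. Qed.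

Lemma Fmap_seg (c : nat) (a b : pt) (t : R) : Fm c (seg a b t) = seg (Fm c a) (Fm c b) t.
Proof. apply pt_ext; unfold seg, Fmap, padd, pscal, psub; simpl; ring. Qed.

Lemma Fword_seg (w : list nat) (a b : pt) (t : R) :
  Fw w (seg a b t) = seg (Fw w a) (Fw w b) t.
Proof. induction w as [|c w IH]; [reflexivity |]. rewrite !Fword_cons, IH. apply Fmap_seg. Qed.

Lemma Fword_midpoint (w : list nat) (a b : pt) :
  Fw w (midpoint a b) = midpoint (Fw w a) (Fw w b).
Proof. rewrite !midpoint_seg. apply Fword_seg. Qed.

Lemma Fmap_vert (c : nat) : Fm c (V c) = V c.
Proof. apply pt_ext; unfold Fmap, padd, pscal; simpl; field. Qed.

Lemma Fmap_seg_l (c : nat) (b : pt) (s : R) : Fm c (seg (V c) b s) = seg (V c) b (s / 2).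
Proof. apply pt_ext; unfold seg, Fmap, padd, pscal, psub; simpl; field. Qed.

Lemma Fmap_seg_r (c : nat) (a : pt) (s : R) :
  Fm c (seg a (V c) s) = seg a (V c) ((1 + s) / 2).
Proof. apply pt_ext; unfold seg, Fmap, padd, pscal, psub; simpl; field. Qed.

Lemma pdist_Fmap (c : nat) (x y : pt) : pdist (Fm c x) (Fm c y) = / 2 * pdist x y.
Proof.
  unfold pdist.
  replace (_ ^ 2 + _ ^ 2) with (Rsqr (/ 2) * ((fst x - fst y) ^ 2 + (snd x - snd y) ^ 2))
    by (unfold Fmap, padd, pscal, Rsqr; simpl; field).
  rewrite sqrt_mult_alt, sqrt_Rsqr by (try apply Rle_0_sqr; lra). reflexivity.
Qed.

Lemma pdist_Fword (w : list nat) (x y : pt) :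
  pdist (Fw w x) (Fw w y) = (/ 2) ^ length w * pdist x y.
Proof.
  induction w as [|c w IH]; simpl; [ring |].
  rewrite pdist_Fmap, IH. ring.
Qed.

Lemma filled_vert (c : nat) : filled (V c).
Proof.
  destruct c as [|[|c]]; [exists 1, 0, 0 | exists 0, 1, 0 | exists 0, 0, 1];
    (repeat split; try lra); apply pt_ext; unfold padd, pscal; simpl; ring.
Qed.

Lemma filled_seg (x y : pt) (s : R) : filled x -> filled y -> 0 <= s <= 1 -> filled (seg x y s).
Proof.
  intros (a & b & c & Ha & Hb & Hc & Habc & ->) (a' & b' & c' & Ha' & Hb' & Hc' & Habc' & ->) Hs.
  exists ((1 - s) * a + s * a'), ((1 - s) * b + s * b'), ((1 - s) * c + s * c').
  repeat split; try nra.
  apply pt_ext; unfold seg, padd, pscal, psub; simpl; ring.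
Qed.

Lemma filled_Fword (w : list nat) (x : pt) : filled x -> filled (Fw w x).
Proof.
  intros Hx; induction w as [|c w IH]; [exact Hx |].
  rewrite Fword_cons. change (Fm c (Fw w x)) with (midpoint (Fw w x) (V c)).
  rewrite midpoint_seg. apply filled_seg; [exact IH | apply filled_vert | lra].
Qed.

Definition on_letters (i j : nat) (w : list nat) : Prop := List.Forall (fun c => c = i \/ c = j) w.

Lemma ternary_app_on_letters (i j : nat) (w w' : list nat) :
  (i < 3)%nat -> (j < 3)%nat -> ternary w -> on_letters i j w' -> ternary (w ++ w').
Proof.
  intros Hi Hj Hw Hw'. apply Forall_app; split; [exact Hw |].
  revert Hw'; apply Forall_impl; intros c [-> | ->]; assumption.
Qed.

(* A binary expansion of s, read through the maps F_i (s |-> s/2) and F_j (s |-> (1+s)/2). *)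
Lemma seg_address (i j n : nat) (s : R) : 0 <= s <= 1 ->
  exists w s', length w = n /\ on_letters i j w /\ 0 <= s' <= 1 /\
    seg (V i) (V j) s = Fw w (seg (V i) (V j) s').
Proof.
  revert s; induction n as [|n IH]; intros s Hs.
  { exists [], s. repeat split; [constructor | lra | lra]. }
  destruct (Rle_lt_dec s (1/2)).
  - destruct (IH (2 * s)) as (w & s' & Hlen & Hw & Hs' & Haddr); [lra |].
    exists (i :: w), s'. repeat split; simpl; auto; try lra; [constructor; auto |].
    rewrite <- Haddr, Fmap_seg_l. f_equal; field.
  - destruct (IH (2 * s - 1)) as (w & s' & Hlen & Hw & Hs' & Haddr); [lra |].
    exists (j :: w), s'. repeat split; simpl; auto; try lra; [constructor; auto |].
    rewrite <- Haddr, Fmap_seg_r. f_equal; field.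
Qed.

Lemma SG_Fword_seg (i j : nat) (w : list nat) (s : R) :
  (i < 3)%nat -> (j < 3)%nat -> ternary w -> 0 <= s <= 1 ->
  SG p0 p1 p2 (Fw w (seg (V i) (V j) s)).
Proof.
  intros Hi Hj Hw Hs m.
  destruct (seg_address i j m s Hs) as (w' & s' & Hlen & Hw' & Hs' & Haddr).
  set (v := w ++ w').
  assert (Hv : ternary v) by (apply (ternary_app_on_letters i j); auto).
  assert (Hmv : (m <= length v)%nat) by (unfold v; rewrite length_app; lia).
  exists (firstn m v). split.
  - split; [apply firstn_length_le; exact Hmv |].
    rewrite <- (firstn_skipn m v) in Hv. apply Forall_app in Hv. tauto.
  - exists (Fw (skipn m v) (seg (V i) (V j) s')). split.
    + apply filled_Fword, filled_seg; [apply filled_vert | apply filled_vert | exact Hs'].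
    + rewrite <- Fword_app, firstn_skipn. unfold v. rewrite Fword_app, Haddr. reflexivity.
Qed.

Fixpoint word_pow (w : list nat) (m : nat) : list nat :=
  match m with O => [] | S m => word_pow w m ++ w end.

Lemma on_letters_word_pow (i j m : nat) : on_letters i j (word_pow [i; j] m).
Proof.
  induction m as [|m IH]; simpl; [constructor |].
  apply Forall_app; split; [exact IH | repeat constructor; tauto].
Qed.

Lemma Fword_pow_ij (i j m : nat) (s : R) :
  Fw (word_pow [i; j] m) (seg (V i) (V j) s) =
  seg (V i) (V j) (1/3 + (s - 1/3) * (/ 4) ^ m).
Proof.
  revert s; induction m as [|m IH]; intros s; simpl word_pow.
  - simpl. f_equal; field.
  - rewrite Fword_app, !Fword_cons. simpl (Fw [] _).
    rewrite Fmap_seg_r, Fmap_seg_l, IH. f_equal; simpl; field.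
Qed.

Section Harmonic.

Variable f : pt -> R.
Hypothesis Hf : harmonic p0 p1 p2 f.

Local Notation val w c := (f (Fw w (V c))).

Lemma val_snoc_same (w : list nat) (c : nat) : val (w ++ [c]) c = val w c.
Proof. rewrite Fword_app. simpl (Fw [c] _). rewrite Fmap_vert. reflexivity. Qed.

Lemma val_snoc (w : list nat) (a b c : nat) : ternary w ->
  (a < 3)%nat -> (b < 3)%nat -> (c < 3)%nat -> b <> a -> a <> c -> b <> c ->
  val (w ++ [a]) b = (2 * val w b + 2 * val w a + val w c) / 5.
Proof.
  intros Hw Ha Hb Hc Hba Hac Hbc.
  rewrite Fword_app. simpl (Fw [a] _).
  change (Fm a (V b)) with (midpoint (V b) (V a)). rewrite Fword_midpoint.
  destruct Hf as [_ Hrule]. apply (Hrule (length w)); auto. split; auto.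
Qed.

Variables i j k : nat.
Hypotheses (Hi : (i < 3)%nat) (Hj : (j < 3)%nat) (Hk : (k < 3)%nat)
  (Hij : i <> j) (Hjk : j <> k) (Hik : i <> k).

Definition cell_in (lo hi : R) (w : list nat) : Prop :=
  lo <= val w i <= hi /\ lo <= val w j <= hi /\ lo <= val w k <= hi.

Lemma cell_in_snoc (lo hi : R) (w : list nat) (c : nat) :
  ternary w -> c = i \/ c = j -> cell_in lo hi w -> cell_in lo hi (w ++ [c]).
Proof.
  intros Hw [-> | ->] (Hx & Hy & Hz); unfold cell_in.
  - rewrite val_snoc_same, (val_snoc w i j k), (val_snoc w i k j); auto. lra.
  - rewrite val_snoc_same, (val_snoc w j i k), (val_snoc w j k i); auto. lra.
Qed.

Lemma cell_in_app (lo hi : R) (w w' : list nat) :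
  ternary w -> on_letters i j w' -> cell_in lo hi w -> cell_in lo hi (w ++ w').
Proof.
  intros Hw Hw'; revert w Hw.
  induction Hw' as [|c w' Hc _ IH]; intros w Hw Hbox; [rewrite app_nil_r; exact Hbox |].
  replace (w ++ c :: w') with ((w ++ [c]) ++ w') by (rewrite <- app_assoc; reflexivity).
  apply IH; [| apply cell_in_snoc; auto].
  apply Forall_app; split; [exact Hw | constructor; [destruct Hc as [-> | ->] |]; auto].
Qed.

Lemma cell_in_seg (lo hi : R) (w : list nat) (s : R) :
  ternary w -> cell_in lo hi w -> 0 <= s <= 1 -> lo <= f (Fw w (seg (V i) (V j) s)) <= hi.
Proof.
  intros Hw Hbox Hs. destruct Hf as [Hcont _].
  set (X := Fw w (seg (V i) (V j) s)).
  set (L := pdist (V i) (V j)).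
  assert (HL : 0 <= L) by apply sqrt_pos.
  apply in_interval_of_approx. intros eps Heps.
  destruct (Hcont X (SG_Fword_seg i j w s Hi Hj Hw Hs) eps Heps) as (delta & Hdelta & Hclose).
  destruct (exists_pow_lt (/ 2) (delta / (L + 1))) as [n Hn]; [lra | apply Rdiv_lt_0_compat; lra |].
  destruct (seg_address i j n s Hs) as (w' & s' & Hlen & Hw' & Hs' & Haddr).
  assert (Hww' : ternary (w ++ w')) by (apply (ternary_app_on_letters i j); auto).
  exists (val (w ++ w') i). split; [apply (cell_in_app lo hi w w'); auto |].
  rewrite Rabs_minus_sym, <- (seg0 (V i) (V j)). apply Hclose.
  { apply SG_Fword_seg; auto; lra. }
  unfold X. rewrite Haddr, <- Fword_app, pdist_Fword, pdist_seg, length_app, pow_add, Hlen.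
  fold L. rewrite Rminus_0_r, Rabs_right by lra.
  assert (0 < (/ 2) ^ n) by (apply pow_lt; lra).
  assert ((/ 2) ^ length w <= 1) by (rewrite <- (pow1 (length w)); apply pow_incr; lra).
  assert (0 <= (/ 2) ^ length w) by (apply pow_le; lra).
  apply Rlt_div_r in Hn; [| lra].
  apply (Rle_lt_trans _ ((/ 2) ^ n * L)); [| nra].
  assert (0 <= s' * L) by nra.
  assert ((/ 2) ^ n * (s' * L) <= (/ 2) ^ n * L) by (apply Rmult_le_compat_l; nra).
  assert (0 <= (/ 2) ^ n * (s' * L)) by (apply Rmult_le_pos; lra).
  rewrite Rmult_assoc, <- (Rmult_1_l ((/ 2) ^ n * L)).
  apply Rmult_le_compat; lra.
Qed.

(* After appending i and then j, the values at the vertices i, j, k are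
   (16x+5y+4z)/25, (10x+10y+5z)/25 and (13x+6y+6z)/25; each exceeds the
   witness below by 6/25 times a convex combination of x-lo, y-lo, z-lo. *)
Lemma cell_in_snoc_ij (lo hi : R) (w : list nat) : ternary w -> cell_in lo hi w ->
  exists lo', cell_in lo' (lo' + 6/25 * (hi - lo)) (w ++ [i; j]).
Proof.
  intros Hw (Hx & Hy & Hz).
  assert (Hwi : ternary (w ++ [i])) by (apply Forall_app; auto).
  exists ((10 * val w i + 5 * val w j + 4 * val w k + 6 * lo) / 25).
  replace (w ++ [i; j]) with ((w ++ [i]) ++ [j]) by (rewrite <- app_assoc; reflexivity).
  unfold cell_in.
  rewrite val_snoc_same, (val_snoc (w ++ [i]) j i k), (val_snoc (w ++ [i]) j k i); auto.
  rewrite val_snoc_same, (val_snoc w i j k), (val_snoc w i k j); auto.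
  lra.
Qed.

Lemma cell_in_word_pow (lo hi : R) (w : list nat) (m : nat) : ternary w -> cell_in lo hi w ->
  exists lo', cell_in lo' (lo' + (hi - lo) * (6/25) ^ m) (w ++ word_pow [i; j] m).
Proof.
  intros Hw Hbox. induction m as [|m IH].
  { exists lo. simpl. rewrite app_nil_r, Rmult_1_r. replace (lo + (hi - lo)) with hi by ring.
    exact Hbox. }
  destruct IH as [lo' Hlo'].
  assert (Hwm : ternary (w ++ word_pow [i; j] m))
    by (apply (ternary_app_on_letters i j); auto; apply on_letters_word_pow).
  destruct (cell_in_snoc_ij _ _ _ Hwm Hlo') as [lo'' Hlo''].
  exists lo''. simpl word_pow. rewrite app_assoc.
  replace (lo'' + (hi - lo) * (6/25) ^ S m)
    with (lo'' + 6/25 * (lo' + (hi - lo) * (6/25) ^ m - lo')) by (simpl; ring).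
  exact Hlo''.
Qed.

Lemma edge_oscillation (u : list nat) : ternary u -> exists C, forall m t,
  Rabs (t - 1/3) < 1/3 * (/ 4) ^ m ->
  Rabs (f (Fw u (seg (V i) (V j) t)) - f (Fw u (seg (V i) (V j) (1/3)))) <= C * (6/25) ^ m.
Proof.
  intros Hu.
  set (M := Rabs (val u i) + Rabs (val u j) + Rabs (val u k)).
  assert (Hbox : cell_in (- M) M u).
  { unfold cell_in, M.
    pose proof (proj1 (Rabs_le_between (val u i) _) (Rle_refl _)).
    pose proof (proj1 (Rabs_le_between (val u j) _) (Rle_refl _)).
    pose proof (proj1 (Rabs_le_between (val u k) _) (Rle_refl _)).
    repeat split; lra. }
  exists (2 * M). intros m t Ht.
  destruct (cell_in_word_pow _ _ u m Hu Hbox) as [lo Hlo].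
  assert (Hum : ternary (u ++ word_pow [i; j] m))
    by (apply (ternary_app_on_letters i j); auto; apply on_letters_word_pow).
  assert (Hq : 0 < (/ 4) ^ m) by (apply pow_lt; lra).
  set (s := 1/3 + (t - 1/3) / (/ 4) ^ m).
  assert (Hs : 0 <= s <= 1).
  { assert (Hd : Rabs ((t - 1/3) / (/ 4) ^ m) < 1/3).
    { rewrite Rabs_div by (apply Rgt_not_eq; exact Hq).
      rewrite (Rabs_right ((/ 4) ^ m)) by lra. apply Rlt_div_l; lra. }
    apply Rabs_def2 in Hd. unfold s. lra. }
  assert (Ht_addr : seg (V i) (V j) t = Fw (word_pow [i; j] m) (seg (V i) (V j) s)).
  { rewrite Fword_pow_ij. f_equal. unfold s. field. lra. }
  assert (Hc_addr : seg (V i) (V j) (1/3) = Fw (word_pow [i; j] m) (seg (V i) (V j) (1/3))).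
  { rewrite Fword_pow_ij. f_equal. ring. }
  rewrite Ht_addr, Hc_addr, <- !Fword_app.
  pose proof (cell_in_seg _ _ _ s Hum Hlo Hs).
  pose proof (cell_in_seg _ _ _ (1/3) Hum Hlo ltac:(lra)).
  apply Rabs_le. lra.
Qed.

End Harmonic.

End Gasket.

Theorem theorem6 (p0 p1 p2 : pt) (f : pt -> R) (m : nat) (u : list nat) (i j : nat) :
  unit_equilateral p0 p1 p2 ->
  harmonic p0 p1 p2 f ->
  word m u -> (i < 3)%nat -> (j < 3)%nat -> i <> j ->
  let v := Fword p0 p1 p2 u (vert p0 p1 p2 i) in
  let w := Fword p0 p1 p2 u (vert p0 p1 p2 j) in
  is_derive (fun t : R => f (padd v (pscal t (psub w v)))) (1/3) 0.
Proof.
  intros _ Hf [_ Hu] Hi Hj Hij v w.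
  destruct (edge_oscillation p0 p1 p2 f Hf i j (3 - i - j) ltac:(lia) ltac:(lia) ltac:(lia)
    ltac:(lia) ltac:(lia) ltac:(lia) u Hu) as [C HC].
  apply (is_derive_ext (fun t => f (Fword p0 p1 p2 u (seg (vert p0 p1 p2 i) (vert p0 p1 p2 j) t)))).
  { intros t. rewrite Fword_seg. reflexivity. }
  apply (is_derive_0_of_geometric_bound _ _ (1/3) (6/25) (/ 4) C); [lra | lra | lra | exact HC].
Qed.
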